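(* Let $H=\pi\sigma_z/\tau$ on a qubit, $|\Phi\rangle=(|0\rangle+|1\rangle)/\sqrt2$, and $\rho=\lambda|\Phi\rangle\langle\Phi|+(1-\lambda)I/2$ with $0<\lambda<1$. Then for any TI operation $\mathcal E$ from $n$ copies of the qubit (total Hamiltonian $\sum_{i=1}^nH^{(i)}$) to one qubit with Hamiltonian $H$, $$1-\langle\Phi|\mathcal E(\rho^{\otimes n})|\Phi\rangle\ \ge\ \frac1n\,\frac{1-\lambda^2}{4\lambda^2}+O\Big(\frac1{n^2}\Big)\quad(n\to\infty).$$
   Context: $H^{(i)}=I^{\otimes(i-1)}\otimes H\otimes I^{\otimes(n-i)}$. TI operation: CPTP map $\mathcal E$ with $e^{-iH_{\rm out}t}\mathcal E(\sigma)e^{iH_{\rm out}t}=\mathcal E(e^{-iH_{\rm in}t}\sigma e^{iH_{\rm in}t})$ for all states $\sigma$ and all $t\in\mathbb R$. *)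

From Stdlib Require Import Reals Lra Factorial.
Open Scope R_scope.

Definition C := (R * R)%type.
Definition Cre (z : C) : R := fst z.
Definition Cim (z : C) : R := snd z.
Definition RtoC (r : R) : C := (r, 0).
Definition C0 : C := (0, 0).
Definition C1 : C := (1, 0).
Definition Ci : C := (0, 1).
Definition Cadd (z w : C) : C := (fst z + fst w, snd z + snd w).
Definition Cmul (z w : C) : C :=
  (fst z * fst w - snd z * snd w, fst z * snd w + snd z * fst w).
Definition Cconj (z : C) : C := (fst z, - snd z).

Fixpoint Csum (f : nat -> C) (n : nat) : C :=
  match n with O => C0 | S m => Cadd (Csum f m) (f m) end.

(* ---------- matrices (entries outside the d x d range are irrelevant) ---------- *)
Definition Mat := nat -> nat -> C.
Definition MatEq (d : nat) (A B : Mat) : Prop :=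
  forall i j, (i < d)%nat -> (j < d)%nat -> A i j = B i j.
Definition Madd (A B : Mat) : Mat := fun i j => Cadd (A i j) (B i j).
Definition Mscale (c : C) (A : Mat) : Mat := fun i j => Cmul c (A i j).
Definition Msum (f : nat -> Mat) (k : nat) : Mat := fun i j => Csum (fun m => f m i j) k.
Definition Mmul (d : nat) (A B : Mat) : Mat :=
  fun i j => Csum (fun k => Cmul (A i k) (B k j)) d.
Definition Madj (A : Mat) : Mat := fun i j => Cconj (A j i).
Definition Mid : Mat := fun i j => if Nat.eqb i j then C1 else C0.
(* Kronecker product A (x) B, where b is the dimension of B *)
Definition kron (b : nat) (A B : Mat) : Mat :=
  fun i j => Cmul (A (i / b)%nat (j / b)%nat) (B (i mod b)%nat (j mod b)%nat).
Definition trace (d : nat) (A : Mat) : C := Csum (fun i => A i i) d.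
Definition qform (d : nat) (x : nat -> C) (A : Mat) : C :=
  Csum (fun i => Csum (fun j => Cmul (Cconj (x i)) (Cmul (A i j) (x j))) d) d.
(* positive semidefinite: <x|A|x> real and >= 0 for all x (implies Hermitian) *)
Definition PSD (d : nat) (A : Mat) : Prop :=
  forall x : nat -> C, Cim (qform d x A) = 0 /\ 0 <= Cre (qform d x A).
Definition density (d : nat) (A : Mat) : Prop := PSD d A /\ trace d A = C1.

Fixpoint Mpow (d : nat) (A : Mat) (k : nat) : Mat :=
  match k with O => Mid | S m => Mmul d (Mpow d A m) A end.
Definition expm_partial (d : nat) (A : Mat) (N : nat) : Mat :=
  Msum (fun k => Mscale (RtoC (/ INR (fact k))) (Mpow d A k)) (S N).
Definition IsExpm (d : nat) (A U : Mat) : Prop :=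
  forall i j, (i < d)%nat -> (j < d)%nat ->
    Un_cv (fun N => Cre (expm_partial d A N i j)) (Cre (U i j)) /\
    Un_cv (fun N => Cim (expm_partial d A N i j)) (Cim (U i j)).

Definition linear_map (din dout : nat) (E : Mat -> Mat) : Prop :=
  (forall A B, MatEq din A B -> MatEq dout (E A) (E B)) /\
  (forall (c : C) (A B : Mat),
      MatEq dout (E (Madd A (Mscale c B))) (Madd (E A) (Mscale c (E B)))).
(* id_k (x) E, ancilla as first tensor factor (block (a,b) of X is mapped by E) *)
Definition ampliate (din dout : nat) (E : Mat -> Mat) (X : Mat) : Mat :=
  fun I J => E (fun i j => X ((I / dout) * din + i)%nat ((J / dout) * din + j)%nat)
               (I mod dout)%nat (J mod dout)%nat.
Definition completely_positive (din dout : nat) (E : Mat -> Mat) : Prop :=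
  forall (k : nat) (X : Mat), PSD (k * din) X -> PSD (k * dout) (ampliate din dout E X).
Definition trace_preserving (din dout : nat) (E : Mat -> Mat) : Prop :=
  forall X, trace dout (E X) = trace din X.
Definition CPTP (din dout : nat) (E : Mat -> Mat) : Prop :=
  linear_map din dout E /\ completely_positive din dout E /\ trace_preserving din dout E.

Definition TI (din dout : nat) (Hin Hout : Mat) (E : Mat -> Mat) : Prop :=
  forall (sigma : Mat) (t : R) (Uin Uout : Mat),
    density din sigma ->
    IsExpm din (Mscale (Cmul (RtoC (- t)) Ci) Hin) Uin ->
    IsExpm dout (Mscale (Cmul (RtoC (- t)) Ci) Hout) Uout ->
    MatEq dout (Mmul dout (Mmul dout Uout (E sigma)) (Madj Uout))
               (E (Mmul din (Mmul din Uin sigma) (Madj Uin))).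

(* H = pi sigma_z / tau, basis |0>, |1> = indices 0, 1 *)
Definition Hq (tau : R) : Mat := fun i j =>
  match i, j with
  | O, O => RtoC (PI / tau)
  | 1%nat, 1%nat => RtoC (- (PI / tau))
  | _, _ => C0
  end.
(* H^{(i)} = I^{(x)(i-1)} (x) H (x) I^{(x)(n-i)} on n qubits, 1 <= i <= n *)
Definition Hlocal (n i : nat) (H : Mat) : Mat :=
  kron (2 ^ (n - i)) (kron 2 Mid H) Mid.
Definition Htot (n : nat) (H : Mat) : Mat := Msum (fun m => Hlocal n (S m) H) n.
Definition Phi : nat -> C := fun i => if Nat.ltb i 2 then RtoC (/ sqrt 2) else C0.
Definition PhiProj : Mat := fun i j => Cmul (Phi i) (Cconj (Phi j)).
Definition rho (lam : R) : Mat :=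
  Madd (Mscale (RtoC lam) PhiProj) (Mscale (RtoC ((1 - lam) / 2)) Mid).
Fixpoint tpow (A : Mat) (n : nat) : Mat :=
  match n with O => Mid | S m => kron 2 (tpow A m) A end.

(* Let [S = E(rho^(x)n)] and [U = exp(-i theta sigma_z)].  Factor [rho = m m^*] and
   [U rho U^* = m g^* = g m^*] with qubit matrices [m], [g].  The Gram matrix of [m^(x)n]
   stacked over [g^(x)n - m^(x)n] is positive, hence so is its image under [id_2 (x) E]: by
   time-translation invariance this is a 4x4 positive matrix with upper-left block [S],
   off-diagonal block [U S U^* - S] and lower-right block of trace
   [tr(g g^* )^n - 1 = (1 + kappa sin^2 theta)^n - 1], where [kappa = 4 lam^2 / (1 - lam^2)].
   A Schur-complement estimate gives
   [4 sin^2 theta |S01|^2 <= (1/4 - |S01|^2) ((1 + kappa sin^2 theta)^n - 1)], and letting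
   [theta -> 0] gives [4 |S01|^2 <= (1/4 - |S01|^2) n kappa].  The infidelity is [1/2 - Re S01]. *)

From Pilot Require Import Defs.
From Stdlib Require Import Reals Lra Lia Factorial.
Open Scope R_scope.

(* [Reals] exports the binomial coefficient [C], which shadows [Defs.C]. *)
Notation CC := Defs.C.

Lemma div2_double_add k r : (r < 2)%nat -> ((2 * k + r) / 2 = k)%nat.
Proof. intros; symmetry; apply Nat.div_unique with r; lia. Qed.

Lemma mod2_double_add k r : (r < 2)%nat -> ((2 * k + r) mod 2 = r)%nat.
Proof. intros; symmetry; apply Nat.mod_unique with k; lia. Qed.

Lemma div2_double k : ((2 * k) / 2 = k)%nat.
Proof. rewrite <- (Nat.add_0_r (2 * k)); apply div2_double_add; lia. Qed.

Lemma mod2_double k : ((2 * k) mod 2 = 0)%nat.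
Proof. rewrite <- (Nat.add_0_r (2 * k)); apply mod2_double_add; lia. Qed.

Lemma mod2_lt a : (a mod 2 < 2)%nat.
Proof. apply Nat.mod_upper_bound; lia. Qed.

Lemma div2_lt a b : (a < 2 * b)%nat -> (a / 2 < b)%nat.
Proof. intros; apply Nat.Div0.div_lt_upper_bound; lia. Qed.

(** * Complex numbers and finite sums *)

Lemma C_ext (z w : CC) : fst z = fst w -> snd z = snd w -> z = w.
Proof. destruct z, w; simpl; intros; subst; auto. Qed.

Ltac cunfold :=
  unfold Defs.Cadd, Defs.Cmul, Defs.Cconj, Defs.RtoC, Defs.C0, Defs.C1, Defs.Ci,
    Defs.Cre, Defs.Cim in *.
Ltac cring := cunfold; apply C_ext; cbn [fst snd]; ring.

Fixpoint Cpow (z : CC) (n : nat) : CC :=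
  match n with O => Defs.C1 | S m => Cmul (Cpow z m) z end.

Lemma Cpow_real s n : Cpow (s, 0) n = (s ^ n, 0).
Proof. induction n; simpl; [reflexivity|]. rewrite IHn; cring. Qed.

Definition expi (phi : R) : CC := (cos phi, sin phi).

Lemma expi_add x y : Cmul (expi x) (expi y) = expi (x + y).
Proof. unfold expi; rewrite cos_plus, sin_plus; cring. Qed.

Lemma Cconj_expi x : Cconj (expi x) = expi (- x).
Proof. unfold expi; rewrite cos_neg, sin_neg; reflexivity. Qed.

Lemma expi_norm x : cos x * cos x + sin x * sin x = 1.
Proof. pose proof (sin2_cos2 x); unfold Rsqr in *; lra. Qed.

Lemma Csum_ext f g n : (forall k, (k < n)%nat -> f k = g k) -> Csum f n = Csum g n.
Proof.
  induction n; simpl; intros H; auto.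
  rewrite IHn by (intros; apply H; lia). rewrite H by lia; auto.
Qed.

Lemma Csum_0 f n : (forall k, (k < n)%nat -> f k = C0) -> Csum f n = C0.
Proof.
  induction n; simpl; intros H; auto.
  rewrite IHn by (intros; apply H; lia). rewrite H by lia; cring.
Qed.

Lemma Csum_single f n i : (i < n)%nat ->
  (forall k, (k < n)%nat -> k <> i -> f k = C0) -> Csum f n = f i.
Proof.
  induction n; simpl; intros Hi H; [lia|].
  destruct (Nat.eq_dec i n) as [->|].
  - rewrite Csum_0 by (intros; apply H; lia); cring.
  - rewrite IHn by (try lia; intros; apply H; lia). rewrite (H n) by lia; cring.
Qed.

Lemma Csum_add f g n :
  Csum (fun k => Cadd (f k) (g k)) n = Cadd (Csum f n) (Csum g n).
Proof. induction n; simpl; [cring|]. rewrite IHn; cring. Qed.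

Lemma Csum_mul_l c f n : Csum (fun k => Cmul c (f k)) n = Cmul c (Csum f n).
Proof. induction n; simpl; [cring|]. rewrite IHn; cring. Qed.

Lemma Csum_mul_r c f n : Csum (fun k => Cmul (f k) c) n = Cmul (Csum f n) c.
Proof. induction n; simpl; [cring|]. rewrite IHn; cring. Qed.

Lemma Csum_conj f n : Cconj (Csum f n) = Csum (fun k => Cconj (f k)) n.
Proof. induction n; simpl; [cring|]. rewrite <- IHn; cring. Qed.

Lemma Csum_swap f n m :
  Csum (fun i => Csum (fun j => f i j) m) n = Csum (fun j => Csum (fun i => f i j) n) m.
Proof.
  induction n; simpl; [rewrite Csum_0; auto|].
  rewrite IHn, <- Csum_add; auto.
Qed.

Lemma Csum_mul_Csum f g n m :
  Cmul (Csum f n) (Csum g m) = Csum (fun i => Csum (fun j => Cmul (f i) (g j)) m) n.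
Proof.
  rewrite <- Csum_mul_r; apply Csum_ext; intros.
  rewrite <- Csum_mul_l; auto.
Qed.

Lemma Csum_double f M :
  Csum f (2 * M) = Csum (fun k => Cadd (f (2 * k)%nat) (f (2 * k + 1)%nat)) M.
Proof.
  induction M; [reflexivity|].
  replace (2 * S M)%nat with (S (S (2 * M))) by lia; cbn [Csum].
  rewrite IHM; replace (2 * M + 1)%nat with (S (2 * M)) by lia; cring.
Qed.

Lemma Csum_nonneg f n :
  (forall k, (k < n)%nat -> Cim (f k) = 0 /\ 0 <= Cre (f k)) ->
  Cim (Csum f n) = 0 /\ 0 <= Cre (Csum f n).
Proof.
  induction n; intros H; [cunfold; simpl; lra|].
  cbn [Csum]. destruct IHn as [H1 H2]; [intros; apply H; lia|].
  destruct (H n) as [H3 H4]; [lia|]. cunfold; simpl in *; lra.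
Qed.

Lemma MatEq_refl d A : MatEq d A A.
Proof. intros i j _ _; reflexivity. Qed.

Lemma MatEq_sym d A B : MatEq d A B -> MatEq d B A.
Proof. intros H i j Hi Hj; symmetry; auto. Qed.

Lemma MatEq_trans d A B C : MatEq d A B -> MatEq d B C -> MatEq d A C.
Proof. intros H1 H2 i j Hi Hj; rewrite H1; auto. Qed.

Lemma Mmul_compat d A A' B B' :
  MatEq d A A' -> MatEq d B B' -> MatEq d (Mmul d A B) (Mmul d A' B').
Proof. intros HA HB i j Hi Hj; apply Csum_ext; intros; rewrite HA, HB by lia; auto. Qed.

Lemma Madd_scale_compat d A A' B B' c : MatEq d A A' -> MatEq d B B' ->
  MatEq d (Madd A (Mscale c B)) (Madd A' (Mscale c B')).
Proof. intros H1 H2 i j Hi Hj; unfold Madd, Mscale; rewrite H1, H2; auto. Qed.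

Lemma trace_compat d A B : MatEq d A B -> trace d A = trace d B.
Proof. intros H; apply Csum_ext; intros; apply H; lia. Qed.

Lemma trace_add d A B : trace d (Madd A B) = Cadd (trace d A) (trace d B).
Proof. apply Csum_add. Qed.

Lemma trace_scale d c A : trace d (Mscale c A) = Cmul c (trace d A).
Proof. apply Csum_mul_l. Qed.

Lemma PSD_compat d A B : MatEq d A B -> PSD d A -> PSD d B.
Proof.
  intros H HA x.
  replace (qform d x B) with (qform d x A); [apply HA|].
  apply Csum_ext; intros; apply Csum_ext; intros; rewrite H; auto.
Qed.

(* [<x| Z Z^* |x> = sum_k |(Z^* x)_k|^2] *)
Lemma Mmul_adj_PSD d' d Z : PSD d' (Mmul d Z (Madj Z)).
Proof.
  intros x.
  set (w := fun k => Csum (fun I => Cmul (Cconj (x I)) (Z I k)) d').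
  assert (Hw : qform d' x (Mmul d Z (Madj Z)) = Csum (fun k => Cmul (w k) (Cconj (w k))) d).
  { transitivity (Csum (fun I => Csum (fun J => Csum (fun k =>
        Cmul (Cmul (Cconj (x I)) (Z I k)) (Cmul (Cconj (Z J k)) (x J))) d) d') d').
    { apply Csum_ext; intros; apply Csum_ext; intros.
      unfold Mmul, Madj; rewrite <- Csum_mul_r, <- Csum_mul_l.
      apply Csum_ext; intros; cring. }
    symmetry. transitivity (Csum (fun k => Csum (fun I => Csum (fun J =>
        Cmul (Cmul (Cconj (x I)) (Z I k)) (Cmul (Cconj (Z J k)) (x J))) d') d') d).
    { apply Csum_ext; intros. unfold w; rewrite Csum_conj, Csum_mul_Csum.
      apply Csum_ext; intros; apply Csum_ext; intros; cring. }
    rewrite Csum_swap; apply Csum_ext; intros; rewrite Csum_swap; auto. }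
  rewrite Hw; apply Csum_nonneg; intros k _.
  cunfold; simpl; split; [ring | nra].
Qed.

Lemma CPTP_compat din dout E A B :
  CPTP din dout E -> MatEq din A B -> MatEq dout (E A) (E B).
Proof. intros [[H _] _]; apply H. Qed.

Lemma CPTP_add_scale din dout E A B c : CPTP din dout E ->
  MatEq dout (E (Madd A (Mscale c B))) (Madd (E A) (Mscale c (E B))).
Proof. intros [[_ H] _]; apply H. Qed.

(* The case [k = 1] of complete positivity. *)
Lemma CPTP_PSD din dout E X : CPTP din dout E -> PSD din X -> PSD dout (E X).
Proof.
  intros [_ [Hcp _]] HX.
  assert (H1 : PSD (1 * dout) (ampliate din dout E X)).
  { apply Hcp; rewrite Nat.mul_1_l; exact HX. }
  rewrite Nat.mul_1_l in H1.
  eapply PSD_compat; [|exact H1].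
  intros I J HI HJ; unfold ampliate.
  rewrite !Nat.div_small, !Nat.mod_small by lia; reflexivity.
Qed.

Lemma CPTP_density din dout E X :
  CPTP din dout E -> density din X -> density dout (E X).
Proof.
  intros HE [HX Htr]; split; [exact (CPTP_PSD _ _ _ _ HE HX)|].
  destruct HE as [_ [_ Htp]]; rewrite Htp; exact Htr.
Qed.

(** * Tensor powers of qubit matrices *)

Lemma tpow_S A m i j :
  tpow A (S m) i j = Cmul (tpow A m (i / 2)%nat (j / 2)%nat) (A (i mod 2)%nat (j mod 2)%nat).
Proof. reflexivity. Qed.

Lemma tpow_compat A B n : MatEq 2 A B -> MatEq (2 ^ n) (tpow A n) (tpow B n).
Proof.
  intros H; induction n; intros i j Hi Hj; [reflexivity|].
  rewrite !tpow_S; simpl in Hi, Hj.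
  rewrite IHn by (apply div2_lt; lia); rewrite H by apply mod2_lt; auto.
Qed.

Lemma tpow_mul A B n :
  MatEq (2 ^ n) (Mmul (2 ^ n) (tpow A n) (tpow B n)) (tpow (Mmul 2 A B) n).
Proof.
  induction n; intros i j Hi Hj.
  - simpl in *; replace i with 0%nat by lia; replace j with 0%nat by lia.
    unfold Mmul, Mid; simpl; cring.
  - rewrite tpow_S, <- IHn by (simpl in *; apply div2_lt; lia).
    unfold Mmul; change (2 ^ S n)%nat with (2 * 2 ^ n)%nat.
    rewrite Csum_double, <- Csum_mul_r; apply Csum_ext; intros k Hk.
    rewrite !tpow_S, ?div2_double_add, ?mod2_double_add, ?div2_double, ?mod2_double by lia.
    cbn [Csum]; cring.
Qed.

Lemma Madj_tpow A n : MatEq (2 ^ n) (Madj (tpow A n)) (tpow (Madj A) n).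
Proof.
  intros i j _ _; revert i j; induction n; intros.
  - unfold Madj, tpow, Mid; rewrite Nat.eqb_sym; destruct (Nat.eqb i j); cring.
  - unfold Madj in *; rewrite !tpow_S, <- IHn; cring.
Qed.

Lemma tpow_mul_adj A B n : MatEq (2 ^ n)
  (Mmul (2 ^ n) (tpow A n) (Madj (tpow B n))) (tpow (Mmul 2 A (Madj B)) n).
Proof.
  eapply MatEq_trans; [apply Mmul_compat; [apply MatEq_refl | apply Madj_tpow]|].
  apply tpow_mul.
Qed.

Lemma trace_tpow A n : trace (2 ^ n) (tpow A n) = Cpow (trace 2 A) n.
Proof.
  induction n; [unfold trace; simpl; unfold Mid; simpl; cring|].
  simpl Cpow; rewrite <- IHn; unfold trace; change (2 ^ S n)%nat with (2 * 2 ^ n)%nat.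
  rewrite Csum_double, <- Csum_mul_r; apply Csum_ext; intros k Hk.
  rewrite !tpow_S, ?div2_double_add, ?mod2_double_add, ?div2_double, ?mod2_double by lia.
  cbn [Csum]; cring.
Qed.

Lemma trace_tpow_real A s n : trace 2 A = (s, 0) -> trace (2 ^ n) (tpow A n) = (s ^ n, 0).
Proof. intros H; rewrite trace_tpow, H; apply Cpow_real. Qed.

(** * Exponentials of diagonal matrices *)

Lemma Mpow_diag d A (z : nat -> CC) :
  (forall i j, (i < d)%nat -> (j < d)%nat -> A i j = if Nat.eqb i j then z i else C0) ->
  forall k i j, (i < d)%nat -> (j < d)%nat ->
  Mpow d A k i j = if Nat.eqb i j then Cpow (z i) k else C0.
Proof.
  intros HA k; induction k; intros i j Hi Hj; [reflexivity|].
  simpl Mpow; unfold Mmul.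
  rewrite (Csum_single _ d i) by (auto; intros l Hl Hli;
    rewrite IHk by auto; apply Nat.eqb_neq in Hli; rewrite Nat.eqb_sym, Hli; cring).
  rewrite IHk, HA, Nat.eqb_refl by auto; simpl Cpow.
  destruct (Nat.eqb_spec i j) as [->|]; [reflexivity | cring].
Qed.

Lemma Cpow_i_even phi j : Cpow (0, phi) (2 * j) = ((-1) ^ j * phi ^ (2 * j), 0).
Proof.
  induction j; [simpl; cring|].
  replace (2 * S j)%nat with (S (S (2 * j))) by lia; cbn [Cpow]; rewrite IHj.
  replace (S (S (2 * j))) with (2 * S j)%nat by lia.
  cunfold; apply C_ext; cbn [fst snd]; rewrite ?pow_mult; simpl; ring.
Qed.

Lemma Cpow_i_odd phi j : Cpow (0, phi) (2 * j + 1) = (0, (-1) ^ j * phi ^ (2 * j + 1)).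
Proof.
  replace (2 * j + 1)%nat with (S (2 * j)) by lia; cbn [Cpow]; rewrite Cpow_i_even.
  cunfold; apply C_ext; cbn [fst snd]; simpl; ring.
Qed.

Definition cos_term phi i := cos_n i * (phi²) ^ i.
Definition sin_term phi i := sin_n i * (phi²) ^ i.

Definition expi_partial phi N :=
  Csum (fun k => Cmul (RtoC (/ INR (fact k))) (Cpow (0, phi) k)) (S N).

Lemma expi_term_even phi j :
  Cmul (RtoC (/ INR (fact (2 * j)))) (Cpow (0, phi) (2 * j)) = (cos_term phi j, 0).
Proof.
  rewrite Cpow_i_even; unfold cos_term, cos_n, Rsqr, Rdiv.
  rewrite pow_mult; replace (phi ^ 2) with (phi * phi) by ring; cring.
Qed.

Lemma expi_term_odd phi j :
  Cmul (RtoC (/ INR (fact (2 * j + 1)))) (Cpow (0, phi) (2 * j + 1)) =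
  (0, sin_term phi j * phi).
Proof.
  rewrite Cpow_i_odd; unfold sin_term, sin_n, Rsqr, Rdiv.
  rewrite pow_add, pow_mult; replace (phi ^ 2) with (phi * phi) by ring; cring.
Qed.

Lemma Csum_pair f g M : Csum (fun j => (f j, g j)) (S M) = (sum_f_R0 f M, sum_f_R0 g M).
Proof. induction M; [simpl; cring|]. cbn [Csum] in *; rewrite IHM; reflexivity. Qed.

Lemma expi_partial_odd phi M :
  expi_partial phi (2 * M + 1) = (sum_f_R0 (cos_term phi) M, phi * sum_f_R0 (sin_term phi) M).
Proof.
  unfold expi_partial; replace (S (2 * M + 1)) with (2 * S M)%nat by lia.
  rewrite Csum_double, scal_sum, <- Csum_pair; apply Csum_ext; intros j _.
  rewrite expi_term_even, expi_term_odd; cring.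
Qed.

Lemma expi_partial_even phi M :
  expi_partial phi (2 * M + 2) = Cadd (expi_partial phi (2 * M + 1)) (cos_term phi (S M), 0).
Proof.
  unfold expi_partial; replace (S (2 * M + 2)) with (S (S (2 * M + 1))) by lia; cbn [Csum].
  replace (S (2 * M + 1)) with (2 * S M)%nat by lia; rewrite expi_term_even; reflexivity.
Qed.

Lemma expi_partial_cos phi : Un_cv (fun N => Cre (expi_partial phi N)) (cos phi).
Proof.
  intros eps He; unfold cos; destruct (exist_cos (Rsqr phi)) as [a Ha].
  destruct (Ha eps He) as [N0 HN]; exists (2 * N0 + 1)%nat; intros N HN'.
  destruct (Nat.Even_or_Odd N) as [[[|M] ->]|[M ->]]; [lia| |].
  - replace (2 * S M)%nat with (2 * M + 2)%nat by lia.
    rewrite expi_partial_even, expi_partial_odd; apply (HN (S M)); lia.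
  - rewrite expi_partial_odd; apply HN; lia.
Qed.

Lemma expi_partial_sin phi : Un_cv (fun N => Cim (expi_partial phi N)) (sin phi).
Proof.
  unfold sin; destruct (exist_sin (Rsqr phi)) as [a Ha].
  assert (Hlim : Un_cv (fun M => phi * sum_f_R0 (sin_term phi) M) (phi * a)).
  { apply CV_mult; [|exact Ha].
    intros e He; exists 0%nat; intros; unfold Rdist; rewrite Rminus_diag, Rabs_R0; auto. }
  intros eps He; destruct (Hlim eps He) as [N0 HN].
  exists (2 * N0 + 2)%nat; intros N HN'.
  destruct (Nat.Even_or_Odd N) as [[[|M] ->]|[M ->]]; [lia| |].
  - replace (2 * S M)%nat with (2 * M + 2)%nat by lia.
    rewrite expi_partial_even, expi_partial_odd; unfold Cim, Cadd; simpl.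
    rewrite Rplus_0_r; apply HN; lia.
  - rewrite expi_partial_odd; apply HN; lia.
Qed.

Lemma IsExpm_diag d A (phi : nat -> R) :
  (forall i j, (i < d)%nat -> (j < d)%nat -> A i j = if Nat.eqb i j then (0, phi i) else C0) ->
  IsExpm d A (fun i j => if Nat.eqb i j then expi (phi i) else C0).
Proof.
  intros HA i j Hi Hj.
  assert (HP : forall N, expm_partial d A N i j =
                         if Nat.eqb i j then expi_partial (phi i) N else C0).
  { intros N; unfold expm_partial, Msum, Mscale, expi_partial.
    destruct (Nat.eqb i j) eqn:E; [apply Csum_ext | apply Csum_0]; intros;
      rewrite (Mpow_diag d A (fun i => (0, phi i))), E by auto; [reflexivity | cring]. }
  destruct (Nat.eqb i j).
  - split; intros eps He;
      [destruct (expi_partial_cos (phi i) eps He) as [N0 HN]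
      | destruct (expi_partial_sin (phi i) eps He) as [N0 HN]];
      exists N0; intros N HN'; rewrite HP; apply HN; auto.
  - split; intros eps He; exists 0%nat; intros N _; rewrite HP;
      unfold Rdist; cunfold; simpl; rewrite Rminus_diag, Rabs_R0; auto.
Qed.

Lemma IsExpm_compat d A U U' : MatEq d U U' -> IsExpm d A U -> IsExpm d A U'.
Proof. intros HU HE i j Hi Hj; rewrite <- HU by auto; apply HE; auto. Qed.

(** * Qubit matrices and the free evolution *)

Definition mk2 (a b c d : CC) : Mat := fun i j =>
  match i, j with 0, 0 => a | 0, 1 => b | 1, 0 => c | 1, 1 => d | _, _ => C0 end%nat.

Lemma MatEq2 A B :
  A 0%nat 0%nat = B 0%nat 0%nat -> A 0%nat 1%nat = B 0%nat 1%nat ->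
  A 1%nat 0%nat = B 1%nat 0%nat -> A 1%nat 1%nat = B 1%nat 1%nat -> MatEq 2 A B.
Proof. intros; intros i j Hi Hj; destruct i as [|[|i]]; destruct j as [|[|j]]; auto; lia. Qed.

Lemma Mmul2 A B i j :
  Mmul 2 A B i j = Cadd (Cmul (A i 0%nat) (B 0%nat j)) (Cmul (A i 1%nat) (B 1%nat j)).
Proof. unfold Mmul; cbn [Csum]; cring. Qed.

Lemma trace2 A : trace 2 A = Cadd (Cadd C0 (A 0%nat 0%nat)) (A 1%nat 1%nat).
Proof. reflexivity. Qed.

Definition phase_gate (theta : R) : Mat := mk2 (expi (- theta)) C0 C0 (expi theta).

Definition phase2 (z : CC) (W : Mat) : Mat :=
  mk2 (W 0 0)%nat (Cmul z (W 0 1)%nat) (Cmul (Cconj z) (W 1 0)%nat) (W 1 1)%nat.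

Lemma phase2_compat z W W' : MatEq 2 W W' -> MatEq 2 (phase2 z W) (phase2 z W').
Proof. intros H; apply MatEq2; unfold phase2; simpl; rewrite ?H by lia; reflexivity. Qed.

Lemma phase_gate_conj theta W : MatEq 2
  (Mmul 2 (Mmul 2 (phase_gate theta) W) (Madj (phase_gate theta))) (phase2 (expi (-2 * theta)) W).
Proof.
  assert (H1 : Cmul (expi (- theta)) (Cconj (expi (- theta))) = Defs.C1).
  { rewrite Cconj_expi, expi_add; replace (_ + _) with 0 by ring; unfold expi; rewrite cos_0, sin_0; reflexivity. }
  assert (H2 : Cmul (expi theta) (Cconj (expi theta)) = Defs.C1).
  { rewrite Cconj_expi, expi_add; replace (_ + _) with 0 by ring; unfold expi; rewrite cos_0, sin_0; reflexivity. }
  assert (H3 : Cmul (expi (- theta)) (Cconj (expi theta)) = expi (-2 * theta)).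
  { rewrite Cconj_expi, expi_add; f_equal; ring. }
  assert (H4 : Cmul (expi theta) (Cconj (expi (- theta))) = Cconj (expi (-2 * theta))).
  { rewrite !Cconj_expi, expi_add; f_equal; ring. }
  apply MatEq2; rewrite !Mmul2; unfold phase_gate, phase2, Madj; simpl.
  - transitivity (Cmul (W 0 0)%nat (Cmul (expi (- theta)) (Cconj (expi (- theta))))); [cring|].
    rewrite H1; cring.
  - rewrite <- H3; cring.
  - rewrite <- H4; cring.
  - transitivity (Cmul (W 1 1)%nat (Cmul (expi theta) (Cconj (expi theta)))); [cring|].
    rewrite H2; cring.
Qed.

Definition Hq_eig (tau : R) (x : nat) : R := if Nat.eqb x 0 then PI / tau else - (PI / tau).

Lemma Hq_diag tau x y : (x < 2)%nat -> (y < 2)%nat ->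
  Hq tau x y = if Nat.eqb x y then RtoC (Hq_eig tau x) else C0.
Proof. intros; destruct x as [|[|x]]; destruct y as [|[|y]]; try lia; reflexivity. Qed.

Lemma phase_gate_diag tau t x y : (x < 2)%nat -> (y < 2)%nat ->
  phase_gate (t * (PI / tau)) x y = if Nat.eqb x y then expi (- t * Hq_eig tau x) else C0.
Proof.
  intros; unfold Hq_eig.
  destruct x as [|[|x]]; destruct y as [|[|y]]; try lia; simpl; try reflexivity; f_equal; ring.
Qed.

Lemma IsExpm_Hq tau t :
  IsExpm 2 (Mscale (Cmul (RtoC (- t)) Ci) (Hq tau)) (phase_gate (t * (PI / tau))).
Proof.
  eapply IsExpm_compat.
  { intros i j Hi Hj; symmetry; apply phase_gate_diag; auto. }
  apply (IsExpm_diag 2 _ (fun x => - t * Hq_eig tau x)); intros i j Hi Hj.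
  unfold Mscale; rewrite Hq_diag by auto; destruct (Nat.eqb i j); cring.
Qed.

Fixpoint bitsum (h : nat -> R) (n a : nat) : R :=
  match n with O => 0 | S m => bitsum h m (a / 2) + h (a mod 2)%nat end.

Lemma bitsum_scale h c n a : bitsum (fun x => c * h x) n a = c * bitsum h n a.
Proof. revert a; induction n; intros; simpl; [ring|]. rewrite IHn; ring. Qed.

Lemma Mid_mod_double k a b :
  Mid (a mod (2 * 2 ^ k))%nat (b mod (2 * 2 ^ k))%nat =
  Cmul (Mid ((a / 2) mod 2 ^ k)%nat ((b / 2) mod 2 ^ k)%nat) (Mid (a mod 2)%nat (b mod 2)%nat).
Proof.
  rewrite !Nat.Div0.mod_mul_r; pose proof (mod2_lt a); pose proof (mod2_lt b); unfold Mid.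
  destruct (Nat.eqb_spec (a mod 2 + 2 * ((a / 2) mod 2 ^ k)) (b mod 2 + 2 * ((b / 2) mod 2 ^ k)));
  destruct (Nat.eqb_spec ((a / 2) mod 2 ^ k) ((b / 2) mod 2 ^ k));
  destruct (Nat.eqb_spec (a mod 2) (b mod 2)); try lia; cring.
Qed.

Lemma Hlocal_S m i H a b : (i < m)%nat ->
  Hlocal (S m) (S i) H a b =
  Cmul (Hlocal m (S i) H (a / 2)%nat (b / 2)%nat) (Mid (a mod 2)%nat (b mod 2)%nat).
Proof.
  intros Hi; unfold Hlocal, kron.
  replace (S m - S i)%nat with (S (m - S i)) by lia.
  change (2 ^ S (m - S i))%nat with (2 * 2 ^ (m - S i))%nat.
  rewrite Mid_mod_double, <- !Nat.Div0.div_div; cring.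
Qed.

Lemma Htot_S m H a b :
  Htot (S m) H a b =
  Cadd (Cmul (Htot m H (a / 2)%nat (b / 2)%nat) (Mid (a mod 2)%nat (b mod 2)%nat))
       (Cmul (Mid (a / 2)%nat (b / 2)%nat) (H (a mod 2)%nat (b mod 2)%nat)).
Proof.
  unfold Htot, Msum; cbn [Csum]; f_equal.
  - rewrite <- Csum_mul_r; apply Csum_ext; intros; apply Hlocal_S; auto.
  - unfold Hlocal, kron; rewrite Nat.sub_diag; simpl (2 ^ 0)%nat.
    rewrite !Nat.div_1_r, !Nat.mod_1_r; change (Mid 0%nat 0%nat) with Defs.C1; cring.
Qed.

Lemma Htot_diag (H : Mat) (h : nat -> R) :
  (forall x y, (x < 2)%nat -> (y < 2)%nat -> H x y = if Nat.eqb x y then RtoC (h x) else C0) ->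
  forall n a b, (a < 2 ^ n)%nat -> (b < 2 ^ n)%nat ->
  Htot n H a b = if Nat.eqb a b then RtoC (bitsum h n a) else C0.
Proof.
  intros HH n; induction n; intros a b Ha Hb.
  - simpl in *; replace a with 0%nat by lia; replace b with 0%nat by lia.
    unfold Htot, Msum; simpl; cring.
  - rewrite Htot_S; simpl in Ha, Hb.
    rewrite IHn by (apply div2_lt; lia); rewrite HH by apply mod2_lt.
    pose proof (Nat.div_mod_eq a 2); pose proof (Nat.div_mod_eq b 2); unfold Mid.
    destruct (Nat.eqb_spec a b) as [->|]; [rewrite !Nat.eqb_refl; simpl; cring|].
    destruct (Nat.eqb_spec (a / 2) (b / 2)); destruct (Nat.eqb_spec (a mod 2) (b mod 2));
      try lia; cring.
Qed.

Lemma tpow_diag (u : Mat) (g : nat -> R) :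
  (forall x y, (x < 2)%nat -> (y < 2)%nat -> u x y = if Nat.eqb x y then expi (g x) else C0) ->
  forall n a b, (a < 2 ^ n)%nat -> (b < 2 ^ n)%nat ->
  tpow u n a b = if Nat.eqb a b then expi (bitsum g n a) else C0.
Proof.
  intros HH n; induction n; intros a b Ha Hb.
  - simpl in *; replace a with 0%nat by lia; replace b with 0%nat by lia.
    unfold Mid, expi; simpl; rewrite cos_0, sin_0; reflexivity.
  - rewrite tpow_S; simpl in Ha, Hb.
    rewrite IHn by (apply div2_lt; lia); rewrite HH by apply mod2_lt.
    pose proof (Nat.div_mod_eq a 2); pose proof (Nat.div_mod_eq b 2).
    destruct (Nat.eqb_spec a b) as [->|]; [rewrite !Nat.eqb_refl; apply expi_add|].
    destruct (Nat.eqb_spec (a / 2) (b / 2)); destruct (Nat.eqb_spec (a mod 2) (b mod 2));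
      try lia; cring.
Qed.

Lemma IsExpm_Htot tau t n : IsExpm (2 ^ n)
  (Mscale (Cmul (RtoC (- t)) Ci) (Htot n (Hq tau))) (tpow (phase_gate (t * (PI / tau))) n).
Proof.
  apply IsExpm_compat with
    (U := fun a b => if Nat.eqb a b then expi (- t * bitsum (Hq_eig tau) n a) else C0).
  - intros a b Ha Hb.
    rewrite (tpow_diag _ (fun x => - t * Hq_eig tau x)), bitsum_scale; auto.
    intros; apply phase_gate_diag; auto.
  - apply (IsExpm_diag _ _ (fun a => - t * bitsum (Hq_eig tau) n a)); intros i j Hi Hj.
    unfold Mscale; rewrite (Htot_diag _ (Hq_eig tau)) by (auto; apply Hq_diag).
    destruct (Nat.eqb i j); cring.
Qed.

Lemma tpow_conj U A n : MatEq (2 ^ n)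
  (Mmul (2 ^ n) (Mmul (2 ^ n) (tpow U n) (tpow A n)) (Madj (tpow U n)))
  (tpow (Mmul 2 (Mmul 2 U A) (Madj U)) n).
Proof.
  eapply MatEq_trans; [|apply tpow_mul].
  apply Mmul_compat; [apply tpow_mul | apply Madj_tpow].
Qed.

Lemma TI_phase_covariance tau n E A t :
  CPTP (2 ^ n) 2 E -> TI (2 ^ n) 2 (Htot n (Hq tau)) (Hq tau) E -> density (2 ^ n) (tpow A n) ->
  MatEq 2 (E (tpow (phase2 (expi (-2 * (t * (PI / tau)))) A) n))
          (phase2 (expi (-2 * (t * (PI / tau)))) (E (tpow A n))).
Proof.
  intros HE HTI Hdens.
  set (U := phase_gate (t * (PI / tau))).
  pose proof (HTI _ t _ _ Hdens (IsExpm_Htot tau t n) (IsExpm_Hq tau t)) as Hti; fold U in Hti.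
  eapply MatEq_trans; [|apply phase_gate_conj].
  eapply MatEq_trans; [|apply MatEq_sym, Hti].
  apply (CPTP_compat _ _ _ _ _ HE).
  eapply MatEq_trans; [|apply MatEq_sym, tpow_conj].
  apply tpow_compat, MatEq_sym, phase_gate_conj.
Qed.

(** * Factorizations of the qubit states *)

Lemma sqrt2_inv_sq : / sqrt 2 * / sqrt 2 = 1 / 2.
Proof. rewrite <- Rinv_mult, sqrt_sqrt by lra; lra. Qed.

Lemma rho_eq lam : MatEq 2 (rho lam) (mk2 (1 / 2, 0) (lam / 2, 0) (lam / 2, 0) (1 / 2, 0)).
Proof.
  pose proof sqrt2_inv_sq as H.
  apply MatEq2; unfold rho, Madd, Mscale, PhiProj, Phi, Mid; simpl; cunfold;
    apply C_ext; cbn [fst snd]; rewrite ?H; try field.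
  all: apply Rgt_not_eq, sqrt_lt_R0; lra.
Qed.

Lemma trace_rho lam : trace 2 (rho lam) = (1, 0).
Proof. rewrite (trace_compat _ _ _ (rho_eq lam)); cunfold; apply C_ext; simpl; lra. Qed.

Lemma trace_phase2 z W : trace 2 (phase2 z W) = trace 2 W.
Proof. reflexivity. Qed.

Section Factorization.
Variables (lam zr zi al gam : R).
Hypothesis Hlam : 0 < lam < 1.
Hypothesis Hz : zr * zr + zi * zi = 1.
Hypothesis Hal : al * al = 1 / 2.
Hypothesis Hgam : gam * gam = 2 / (1 - lam ^ 2).
Hypothesis Hgam0 : 0 < gam.

Definition rho_factor : Mat := mk2 (al, 0) C0 (lam * al, 0) (/ gam, 0).

(* [phase2 (zr, zi) (rho lam)] times the inverse of [rho_factor^*] *)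
Definition phase_factor : Mat :=
  mk2 (al, 0) (gam * (lam / 2 * zr - lam / 2), gam * (lam / 2 * zi))
      (2 * al * (lam / 2 * zr), - (2 * al * (lam / 2 * zi)))
      (gam * (1 / 2 - lam * (lam / 2 * zr)), gam * (lam * (lam / 2 * zi))).

Lemma phase_rho_eq : MatEq 2 (phase2 (zr, zi) (rho lam))
  (mk2 (1 / 2, 0) (lam / 2 * zr, lam / 2 * zi) (lam / 2 * zr, - (lam / 2 * zi)) (1 / 2, 0)).
Proof.
  eapply MatEq_trans; [apply phase2_compat, rho_eq|].
  apply MatEq2; unfold phase2; simpl; cring.
Qed.

Lemma rho_factor_adj : MatEq 2 (Mmul 2 rho_factor (Madj rho_factor)) (rho lam).
Proof.
  eapply MatEq_trans; [|apply MatEq_sym, rho_eq].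
  assert (Hg : / gam * / gam = (1 - lam ^ 2) / 2).
  { rewrite <- Rinv_mult, Hgam; field; nra. }
  apply MatEq2; rewrite Mmul2; unfold rho_factor, Madj; simpl; cunfold;
    apply C_ext; cbn [fst snd]; nra.
Qed.

Lemma rho_phase_factor_adj : MatEq 2 (Mmul 2 rho_factor (Madj phase_factor)) (phase2 (zr, zi) (rho lam)).
Proof.
  eapply MatEq_trans; [|apply MatEq_sym, phase_rho_eq].
  assert (gam <> 0) by lra; assert (Hal2 : al ^ 2 = 1 / 2) by nra.
  apply MatEq2; rewrite Mmul2; unfold rho_factor, phase_factor, Madj; simpl; cunfold;
    apply C_ext; cbn [fst snd]; try nra.
  all: field_simplify; try (rewrite ?Hal2; field); auto.
Qed.

Lemma phase_rho_factor_adj : MatEq 2 (Mmul 2 phase_factor (Madj rho_factor)) (phase2 (zr, zi) (rho lam)).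
Proof.
  eapply MatEq_trans; [|apply MatEq_sym, phase_rho_eq].
  assert (gam <> 0) by lra; assert (Hal2 : al ^ 2 = 1 / 2) by nra.
  apply MatEq2; rewrite Mmul2; unfold rho_factor, phase_factor, Madj; simpl; cunfold;
    apply C_ext; cbn [fst snd]; try nra.
  all: field_simplify; try (rewrite ?Hal2; field); auto.
Qed.

Lemma trace_phase_factor_adj :
  trace 2 (Mmul 2 phase_factor (Madj phase_factor)) = (1 + lam ^ 2 * (1 - zr) * (2 / (1 - lam ^ 2)), 0).
Proof.
  rewrite trace2, !Mmul2; unfold phase_factor, Madj; simpl; cunfold; apply C_ext; cbn [fst snd]; [|ring].
  transitivity (al * al * (1 + lam * lam * (zr * zr + zi * zi)) +
    gam * gam * (lam * lam / 4 * ((zr - 1) * (zr - 1) + zi * zi)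
      + (1 / 2 - lam * lam / 2 * zr) * (1 / 2 - lam * lam / 2 * zr) + lam * lam * lam * lam / 4 * (zi * zi)));
    [field|].
  replace (zi * zi) with (1 - zr * zr) by lra; rewrite Hal, Hgam; field; nra.
Qed.

End Factorization.

(** * The Gram matrix of two stacked tensor powers *)

Definition stack_diff (d : nat) (P Q : Mat) : Mat := fun I k =>
  if Nat.ltb I d then P I k else Cadd (Q (I - d)%nat k) (Cmul (RtoC (-1)) (P (I - d)%nat k)).

Definition blk (d : nat) (X : Mat) (b1 b2 : nat) : Mat :=
  fun i j => X (b1 * d + i)%nat (b2 * d + j)%nat.

Section StackDiff.
Variables (d : nat) (P Q : Mat).
Let X := Mmul d (stack_diff d P Q) (Madj (stack_diff d P Q)).

Lemma stack_diff_top i k : (i < d)%nat -> stack_diff d P Q (0 * d + i)%nat k = P i k.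
Proof.
  intros Hi; unfold stack_diff; replace (0 * d + i)%nat with i by lia.
  apply Nat.ltb_lt in Hi; rewrite Hi; auto.
Qed.

Lemma stack_diff_bottom i k :
  stack_diff d P Q (1 * d + i)%nat k = Cadd (Q i k) (Cmul (RtoC (-1)) (P i k)).
Proof.
  unfold stack_diff; replace (Nat.ltb (1 * d + i) d) with false by (symmetry; apply Nat.ltb_ge; lia).
  replace (1 * d + i - d)%nat with i by lia; auto.
Qed.

Lemma blk00_stack_diff : MatEq d (blk d X 0 0) (Mmul d P (Madj P)).
Proof.
  intros i j Hi Hj; unfold X, blk, Mmul, Madj; apply Csum_ext; intros.
  rewrite !stack_diff_top; auto.
Qed.

Lemma blk01_stack_diff : MatEq d (blk d X 0 1)
  (Madd (Mmul d P (Madj Q)) (Mscale (RtoC (-1)) (Mmul d P (Madj P)))).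
Proof.
  intros i j Hi Hj; unfold X, blk, Mmul, Madj, Madd, Mscale.
  rewrite <- Csum_mul_l, <- Csum_add; apply Csum_ext; intros.
  rewrite stack_diff_top, stack_diff_bottom by auto; cring.
Qed.

Lemma blk10_stack_diff : MatEq d (blk d X 1 0)
  (Madd (Mmul d Q (Madj P)) (Mscale (RtoC (-1)) (Mmul d P (Madj P)))).
Proof.
  intros i j Hi Hj; unfold X, blk, Mmul, Madj, Madd, Mscale.
  rewrite <- Csum_mul_l, <- Csum_add; apply Csum_ext; intros.
  rewrite stack_diff_top, stack_diff_bottom by auto; cring.
Qed.

Lemma blk11_stack_diff : MatEq d (blk d X 1 1)
  (Madd (Madd (Madd (Mmul d Q (Madj Q)) (Mscale (RtoC (-1)) (Mmul d Q (Madj P))))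
     (Mscale (RtoC (-1)) (Mmul d P (Madj Q)))) (Mmul d P (Madj P))).
Proof.
  intros i j Hi Hj; unfold X, blk, Mmul, Madj, Madd, Mscale.
  rewrite <- !Csum_mul_l, <- !Csum_add; apply Csum_ext; intros.
  rewrite !stack_diff_bottom; cring.
Qed.

End StackDiff.

Lemma gram_stack_diff_tpow (m g A B : Mat) (s : R) n :
  MatEq 2 (Mmul 2 m (Madj m)) A -> MatEq 2 (Mmul 2 m (Madj g)) B ->
  MatEq 2 (Mmul 2 g (Madj m)) B -> trace 2 A = (1, 0) -> trace 2 B = (1, 0) ->
  trace 2 (Mmul 2 g (Madj g)) = (s, 0) ->
  let Z := stack_diff (2 ^ n) (tpow m n) (tpow g n) in
  let X := Mmul (2 ^ n) Z (Madj Z) in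
  MatEq (2 ^ n) (blk (2 ^ n) X 0 0) (tpow A n) /\
  MatEq (2 ^ n) (blk (2 ^ n) X 0 1) (Madd (tpow B n) (Mscale (RtoC (-1)) (tpow A n))) /\
  MatEq (2 ^ n) (blk (2 ^ n) X 1 0) (Madd (tpow B n) (Mscale (RtoC (-1)) (tpow A n))) /\
  trace (2 ^ n) (blk (2 ^ n) X 1 1) = (s ^ n - 1, 0).
Proof.
  intros Hmm Hmg Hgm HA HB Hgg Z X.
  assert (Tpow : forall U V, trace (2 ^ n) (Mmul (2 ^ n) (tpow U n) (Madj (tpow V n))) =
                             Cpow (trace 2 (Mmul 2 U (Madj V))) n).
  { intros; rewrite (trace_compat _ _ _ (tpow_mul_adj U V n)); apply trace_tpow. }
  assert (Tensor : forall U V W, MatEq 2 (Mmul 2 U (Madj V)) W ->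
                   MatEq (2 ^ n) (Mmul (2 ^ n) (tpow U n) (Madj (tpow V n))) (tpow W n)).
  { intros U V W H; eapply MatEq_trans; [apply tpow_mul_adj | apply tpow_compat, H]. }
  split; [|split; [|split]].
  - eapply MatEq_trans; [apply blk00_stack_diff | apply Tensor, Hmm].
  - eapply MatEq_trans; [apply blk01_stack_diff|].
    apply Madd_scale_compat; apply Tensor; assumption.
  - eapply MatEq_trans; [apply blk10_stack_diff|].
    apply Madd_scale_compat; apply Tensor; assumption.
  - unfold X, Z; rewrite (trace_compat _ _ _ (blk11_stack_diff _ _ _)), !trace_add, !trace_scale, !Tpow.
    rewrite (trace_compat _ _ _ Hgm), (trace_compat _ _ _ Hmg), (trace_compat _ _ _ Hmm).
    rewrite Hgg, HA, HB, !Cpow_real, pow1; cring.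
Qed.

Lemma ampliate_blk din E X b1 b2 i j : (i < 2)%nat -> (j < 2)%nat ->
  ampliate din 2 E X (2 * b1 + i)%nat (2 * b2 + j)%nat = E (blk din X b1 b2) i j.
Proof.
  intros Hi Hj; unfold ampliate.
  rewrite !div2_double_add, !mod2_double_add by auto; reflexivity.
Qed.

(** * Positive semidefinite 2x2 and 4x4 matrices *)

Definition v2 (x0 x1 : CC) : nat -> CC := fun i =>
  match i with 0 => x0 | 1 => x1 | _ => C0 end%nat.

Definition v4 (x0 x1 x2 x3 : CC) : nat -> CC := fun i =>
  match i with 0 => x0 | 1 => x1 | 2 => x2 | 3 => x3 | _ => C0 end%nat.

Lemma density2_entries S : density 2 S ->
  exists a b p q, S 0%nat 0%nat = (a, 0) /\ S 1%nat 1%nat = (b, 0) /\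
    S 0%nat 1%nat = (p, q) /\ S 1%nat 0%nat = (p, - q) /\
    0 <= a /\ 0 <= b /\ a + b = 1 /\ p ^ 2 + q ^ 2 <= a * b.
Proof.
  intros [HP Htr].
  assert (Q : forall x0 x1, Cim (qform 2 (v2 x0 x1) S) = 0 /\ 0 <= Cre (qform 2 (v2 x0 x1) S))
    by (intros; apply HP).
  pose proof (Q (1, 0) C0) as [A1 A2]; pose proof (Q C0 (1, 0)) as [B1 B2].
  pose proof (Q (1, 0) (1, 0)) as [C1 _]; pose proof (Q (1, 0) (0, 1)) as [D1 _].
  unfold qform in *; cbn [Csum v2] in *; rewrite trace2 in Htr; unfold Cre, Cim in *; cunfold.
  cbn [fst snd] in *; apply pair_equal_spec in Htr as [Htr _].
  set (a := fst (S 0 0)%nat) in *; set (b := fst (S 1 1)%nat) in *.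
  set (p := fst (S 0 1)%nat) in *; set (q := snd (S 0 1)%nat) in *.
  assert (H00 : S 0%nat 0%nat = (a, 0)) by (apply C_ext; simpl; [auto | nra]).
  assert (H11 : S 1%nat 1%nat = (b, 0)) by (apply C_ext; simpl; [auto | nra]).
  assert (H01 : S 0%nat 1%nat = (p, q)) by (apply C_ext; simpl; auto).
  assert (H10 : S 1%nat 0%nat = (p, - q)) by (apply C_ext; simpl; nra).
  exists a, b, p, q; repeat split; auto; try nra.
  pose proof (HP (v2 (p, q) (- a, 0))) as [_ G1]; pose proof (HP (v2 (- b, 0) (p, - q))) as [_ G2].
  unfold qform in G1, G2; cbn [Csum v2] in G1, G2; rewrite H00, H11, H01, H10 in G1, G2.
  unfold Cre in G1, G2; cunfold; cbn [fst snd] in G1, G2; nra.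
Qed.

(* The Schur complement of the upper-left block, tested with vectors built from its adjugate
   so as not to divide by its determinant [D]. *)
Lemma psd4_schur_quadratic O a b p q xr xi s :
  PSD 4 O -> a + b = 1 ->
  O 0%nat 0%nat = (a, 0) -> O 1%nat 1%nat = (b, 0) ->
  O 0%nat 1%nat = (p, q) -> O 1%nat 0%nat = (p, - q) ->
  O 0%nat 2%nat = C0 -> O 2%nat 0%nat = C0 -> O 1%nat 3%nat = C0 -> O 3%nat 1%nat = C0 ->
  O 0%nat 3%nat = (xr, xi) -> O 2%nat 1%nat = (xr, xi) ->
  O 1%nat 2%nat = (xr, - xi) -> O 3%nat 0%nat = (xr, - xi) ->
  let N := xr ^ 2 + xi ^ 2 in let D := a * b - (p ^ 2 + q ^ 2) in
  0 <= s * s * N * D - 2 * s * N + (Cre (O 2 2)%nat + Cre (O 3 3)%nat).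
Proof.
  intros HP Hab H00 H11 H01 H10 E02 E20 E13 E31 F03 F21 F12 F30 N D.
  pose proof (HP (v4 (s * (p * xr + q * xi), s * (q * xr - p * xi)) (- s * a * xr, s * a * xi)
                     (1, 0) C0)) as [_ G1].
  pose proof (HP (v4 (- s * b * xr, - s * b * xi) (s * (p * xr + q * xi), s * (p * xi - q * xr))
                     C0 (1, 0))) as [_ G2].
  unfold qform in G1, G2; cbn [Csum v4] in G1, G2.
  rewrite H00, H11, H01, H10, E02, E20, E13, E31, F03, F21, F12, F30 in G1, G2.
  unfold Cre; cunfold; cbn [fst snd] in G1, G2.
  match type of G1 with 0 <= ?e =>
    replace e with (s * s * a * N * D - 2 * s * a * N + fst (O 2 2)%nat) in G1
      by (unfold N, D; ring) end.
  match type of G2 with 0 <= ?e =>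
    replace e with (s * s * b * N * D - 2 * s * b * N + fst (O 3 3)%nat) in G2
      by (unfold N, D; ring) end.
  replace b with (1 - a) in G2 by lra; nra.
Qed.

Lemma quadratic_nonneg_bound N D T :
  (forall s, 0 <= s * s * N * D - 2 * s * N + T) -> 0 <= N -> 0 <= D -> N <= D * T.
Proof.
  intros Hq HN HD.
  assert (HT : 0 <= T) by (specialize (Hq 0); lra).
  destruct (Req_dec N 0) as [->|HN0]; [nra|].
  assert (HDp : 0 < D).
  { destruct (Req_dec D 0) as [HD0|]; [|lra]; exfalso.
    specialize (Hq ((T + 1) / N)); rewrite HD0 in Hq.
    replace (2 * ((T + 1) / N) * N) with (2 * (T + 1)) in Hq by (field; lra); lra. }
  specialize (Hq (/ D)).
  replace (/ D * / D * N * D - 2 * / D * N) with (- (N / D)) in Hq by (field; lra).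
  apply Rmult_le_reg_r with (/ D); [apply Rinv_0_lt_compat; lra|].
  replace (D * T * / D) with T by (field; lra); unfold Rdiv in Hq; lra.
Qed.

(* The off-diagonal block is [phase2 z S - S]: its diagonal vanishes and its corner entries
   are [(z - 1) S01] and its conjugate, whence [N = |S01|^2 |z - 1|^2]. *)
Lemma psd4_phase_block_bound O S zr zi T :
  PSD 4 O -> density 2 S -> zr * zr + zi * zi = 1 ->
  MatEq 2 O S ->
  MatEq 2 (fun i j => O i (2 + j)%nat) (Madd (phase2 (zr, zi) S) (Mscale (RtoC (-1)) S)) ->
  MatEq 2 (fun i j => O (2 + i)%nat j) (Madd (phase2 (zr, zi) S) (Mscale (RtoC (-1)) S)) ->
  Cre (O 2 2)%nat + Cre (O 3 3)%nat = T ->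
  (Cre (S 0 1)%nat ^ 2 + Cim (S 0 1)%nat ^ 2) * (2 - 2 * zr) <=
  (1 / 4 - (Cre (S 0 1)%nat ^ 2 + Cim (S 0 1)%nat ^ 2)) * T.
Proof.
  intros HP HS Hz Hup Hright Hdown HT.
  destruct (density2_entries S HS) as (a & b & p & q & S00 & S11 & S01 & S10 & Ha & Hb & Hab & Hpq).
  set (xr := (zr - 1) * p - zi * q); set (xi := (zr - 1) * q + zi * p).
  assert (Hoff : MatEq 2 (Madd (phase2 (zr, zi) S) (Mscale (RtoC (-1)) S))
                         (mk2 C0 (xr, xi) (xr, - xi) C0)).
  { apply MatEq2; unfold Madd, Mscale, phase2; simpl; rewrite ?S00, ?S11, ?S01, ?S10;
      unfold xr, xi; cring. }
  pose proof (MatEq_trans _ _ _ _ Hright Hoff) as R; pose proof (MatEq_trans _ _ _ _ Hdown Hoff) as L.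
  assert (Hquad : forall s, 0 <= s * s * (xr ^ 2 + xi ^ 2) * (a * b - (p ^ 2 + q ^ 2))
                                 - 2 * s * (xr ^ 2 + xi ^ 2) + T).
  { intros s; rewrite <- HT; apply psd4_schur_quadratic; auto;
      first [rewrite Hup by lia; assumption
            | exact (R 0%nat 0%nat ltac:(lia) ltac:(lia)) | exact (R 0%nat 1%nat ltac:(lia) ltac:(lia))
            | exact (R 1%nat 0%nat ltac:(lia) ltac:(lia)) | exact (R 1%nat 1%nat ltac:(lia) ltac:(lia))
            | exact (L 0%nat 0%nat ltac:(lia) ltac:(lia)) | exact (L 0%nat 1%nat ltac:(lia) ltac:(lia))
            | exact (L 1%nat 0%nat ltac:(lia) ltac:(lia)) | exact (L 1%nat 1%nat ltac:(lia) ltac:(lia))]. }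
  assert (HN : xr ^ 2 + xi ^ 2 = (p ^ 2 + q ^ 2) * (2 - 2 * zr)) by (unfold xr, xi; nra).
  assert (HT0 : 0 <= T) by (specialize (Hquad 0); lra).
  pose proof (quadratic_nonneg_bound _ _ _ Hquad
    ltac:(pose proof (pow2_ge_0 xr); pose proof (pow2_ge_0 xi); lra) ltac:(lra)) as Hbound.
  rewrite S01; unfold Cre, Cim; cbn [fst snd].
  assert (a * b <= 1 / 4) by (replace b with (1 - a) by lra; pose proof (pow2_ge_0 (a - 1 / 2)); nra).
  rewrite HN in Hbound; eapply Rle_trans; [exact Hbound|].
  apply Rmult_le_compat_r; lra.
Qed.

Lemma pow_sub1_le z n : 0 <= z -> (1 + z) ^ n - 1 <= INR n * z * (1 + z) ^ n.
Proof.
  intros Hz; induction n; [simpl; lra|].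
  rewrite S_INR; simpl.
  assert (1 <= (1 + z) ^ n) by (apply pow_R1_Rle; lra).
  nra.
Qed.

Lemma pow_mul_one_sub_le z n : 0 <= z -> (1 + z) ^ n * (1 - INR n * z) <= 1.
Proof.
  intros Hz; induction n; [simpl; lra|].
  rewrite S_INR; simpl.
  assert (0 <= (1 + z) ^ n) by (apply pow_le; lra).
  assert ((1 + z) * (1 - (INR n + 1) * z) <= 1 - INR n * z) by (pose proof (pos_INR n); nra).
  nra.
Qed.

Lemma le_of_small_power_bound a c k n : 0 <= a -> 0 <= k ->
  (forall eps, 0 < eps -> exists y, 0 < y < eps /\ c * y <= a * ((1 + k * y) ^ n - 1)) ->
  c <= a * (INR n * k).
Proof.
  intros Ha Hk H.
  assert (Hnk : 0 <= INR n * k) by (pose proof (pos_INR n); nra).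
  destruct (Rle_or_lt c 0) as [Hc|Hc]; [nra|].
  assert (Hstep : forall y, 0 < y -> c * y <= a * ((1 + k * y) ^ n - 1) ->
                  c <= a * (INR n * k) + c * (INR n * k) * y).
  { intros y Hy Hcy.
    assert (Hky : 0 <= k * y) by nra.
    pose proof (pow_sub1_le (k * y) n Hky); pose proof (pow_mul_one_sub_le (k * y) n Hky).
    set (Q := (1 + k * y) ^ n) in *.
    assert (HQ : c <= a * (INR n * k) * Q).
    { apply Rmult_le_reg_r with y; [exact Hy|]. nra. }
    destruct (Rle_or_lt 0 (1 - INR n * (k * y))); nra. }
  apply Rle_plus_epsilon; intros eps He.
  set (w := c * (INR n * k)).
  assert (Hw : 0 <= w) by (unfold w; nra).
  destruct (H (eps / (w + 1))) as [y [[Hy0 Hy1] Hy]]; [apply Rdiv_lt_0_compat; lra|].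
  specialize (Hstep y Hy0 Hy); fold w in Hstep.
  assert (w * y <= eps).
  { apply Rle_trans with (w * (eps / (w + 1))); [nra|].
    unfold Rdiv; rewrite <- Rmult_assoc; apply Rmult_le_reg_r with (w + 1); [lra|].
    rewrite Rmult_assoc, Rinv_l by lra; nra. }
  lra.
Qed.

(* [rc <= sqrt (1 / (4 (1 + r))) <= 1/2 - r/4 + r^2/4] *)
Lemma half_sub_ge x rc r : 0 < r -> 0 <= x -> rc * rc <= x -> 4 * x * (1 + r) <= 1 ->
  1 / 2 - rc >= r / 4 - r ^ 2 / 4.
Proof.
  intros Hr Hx Hrc H.
  set (B := 1 / 2 - r / 4 + r ^ 2 / 4).
  assert (HB : 0 < B) by (unfold B; nra).
  assert (HB2 : 1 <= (1 + r) * (4 * B * B)).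
  { unfold B; assert (0 < 1 + 3 * r - r ^ 2 + r ^ 3) by nra.
    assert (0 <= r ^ 2 * (1 + 3 * r - r ^ 2 + r ^ 3)) by nra; nra. }
  assert (rc <= B).
  { destruct (Rle_or_lt rc B) as [|Hlt]; auto.
    assert (B * B < rc * rc) by nra; nra. }
  unfold B in *; lra.
Qed.

Definition gam (lam : R) : R := sqrt (2 / (1 - lam ^ 2)).

(* [rld_fisher lam = tr (rho^-1 [sigma_z, rho] [rho, sigma_z])] for [rho = rho lam] *)
Definition rld_fisher (lam : R) : R := 4 * lam ^ 2 / (1 - lam ^ 2).

Lemma gam_sq lam : 0 < lam < 1 -> gam lam * gam lam = 2 / (1 - lam ^ 2).
Proof. intros; apply sqrt_sqrt, Rlt_le, Rdiv_lt_0_compat; nra. Qed.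

Lemma gam_pos lam : 0 < lam < 1 -> 0 < gam lam.
Proof. intros; apply sqrt_lt_R0, Rdiv_lt_0_compat; nra. Qed.

Lemma density_tpow_rho lam n : 0 < lam < 1 -> density (2 ^ n) (tpow (rho lam) n).
Proof.
  intros Hl; split.
  - set (m := rho_factor lam (/ sqrt 2) (gam lam)).
    apply PSD_compat with (Mmul (2 ^ n) (tpow m n) (Madj (tpow m n))); [|apply Mmul_adj_PSD].
    eapply MatEq_trans; [apply tpow_mul_adj|].
    apply tpow_compat, rho_factor_adj; auto using sqrt2_inv_sq, gam_sq, gam_pos.
  - rewrite (trace_tpow_real _ 1 _ (trace_rho lam)), pow1; reflexivity.
Qed.

(* Apply [id_2 (x) E] to the Gram matrix of [m^(x)n] stacked over [g^(x)n - m^(x)n]. *)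
Lemma channel_gram_output n E (m g A B : Mat) (s : R) :
  CPTP (2 ^ n) 2 E ->
  MatEq 2 (Mmul 2 m (Madj m)) A -> MatEq 2 (Mmul 2 m (Madj g)) B ->
  MatEq 2 (Mmul 2 g (Madj m)) B -> trace 2 A = (1, 0) -> trace 2 B = (1, 0) ->
  trace 2 (Mmul 2 g (Madj g)) = (s, 0) ->
  let D := Madd (E (tpow B n)) (Mscale (RtoC (-1)) (E (tpow A n))) in
  exists O, PSD 4 O /\ MatEq 2 O (E (tpow A n)) /\
    MatEq 2 (fun i j => O i (2 + j)%nat) D /\ MatEq 2 (fun i j => O (2 + i)%nat j) D /\
    Cre (O 2 2)%nat + Cre (O 3 3)%nat = s ^ n - 1.
Proof.
  intros HE Hmm Hmg Hgm HA HB Hgg D.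
  destruct (gram_stack_diff_tpow m g A B s n Hmm Hmg Hgm HA HB Hgg) as (B00 & B01 & B10 & T11).
  set (Z := stack_diff (2 ^ n) (tpow m n) (tpow g n)) in *.
  set (X := Mmul (2 ^ n) Z (Madj Z)) in *.
  assert (HD : forall b1 b2, MatEq (2 ^ n) (blk (2 ^ n) X b1 b2)
                 (Madd (tpow B n) (Mscale (RtoC (-1)) (tpow A n))) -> MatEq 2 (E (blk (2 ^ n) X b1 b2)) D).
  { intros b1 b2 H; eapply MatEq_trans; [apply (CPTP_compat _ _ _ _ _ HE H)|].
    apply (CPTP_add_scale _ _ _ _ _ _ HE). }
  exists (ampliate (2 ^ n) 2 E X); split; [|split; [|split; [|split]]].
  - destruct HE as [_ [Hcp _]]; apply (Hcp 2%nat), Mmul_adj_PSD.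
  - intros i j Hi Hj; refine (eq_trans (ampliate_blk _ E X 0 0 i j Hi Hj) _).
    apply (CPTP_compat _ _ _ _ _ HE B00); auto.
  - intros i j Hi Hj; refine (eq_trans (ampliate_blk _ E X 0 1 i j Hi Hj) _); apply HD; auto.
  - intros i j Hi Hj; refine (eq_trans (ampliate_blk _ E X 1 0 i j Hi Hj) _); apply HD; auto.
  - change (Cre (ampliate (2 ^ n) 2 E X (2 * 1 + 0) (2 * 1 + 0))%nat +
            Cre (ampliate (2 ^ n) 2 E X (2 * 1 + 1) (2 * 1 + 1))%nat = s ^ n - 1).
    rewrite !ampliate_blk by lia.
    destruct HE as [_ [_ Htp]]; pose proof (Htp (blk (2 ^ n) X 1 1)) as Htr.
    rewrite T11, trace2 in Htr; apply (f_equal fst) in Htr; unfold Cre; cunfold; simpl in Htr; lra.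
Qed.

Lemma coherence_angle_bound tau lam n E t : 0 < lam < 1 ->
  CPTP (2 ^ n) 2 E -> TI (2 ^ n) 2 (Htot n (Hq tau)) (Hq tau) E ->
  let S := E (tpow (rho lam) n) in
  let x := Cre (S 0 1)%nat ^ 2 + Cim (S 0 1)%nat ^ 2 in
  let y := sin (t * (PI / tau)) ^ 2 in
  4 * x * y <= (1 / 4 - x) * ((1 + rld_fisher lam * y) ^ n - 1).
Proof.
  intros Hl HE HTI S x y.
  set (theta := t * (PI / tau)) in *.
  set (zr := cos (-2 * theta)); set (zi := sin (-2 * theta)).
  assert (Hz : zr * zr + zi * zi = 1) by apply expi_norm.
  pose proof (sqrt2_inv_sq) as Hal; pose proof (gam_sq lam Hl) as Hg; pose proof (gam_pos lam Hl).
  set (s := 1 + lam ^ 2 * (1 - zr) * (2 / (1 - lam ^ 2))).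
  destruct (channel_gram_output n E (rho_factor lam (/ sqrt 2) (gam lam))
              (phase_factor lam zr zi (/ sqrt 2) (gam lam)) (rho lam) (phase2 (zr, zi) (rho lam)) s HE)
    as (O & HO & Hup & Hright & Hdown & HT);
    auto using rho_factor_adj, rho_phase_factor_adj, phase_rho_factor_adj, trace_rho.
  { rewrite trace_phase2; apply trace_rho. }
  { apply trace_phase_factor_adj; auto. }
  assert (Hcov : MatEq 2 (Madd (E (tpow (phase2 (zr, zi) (rho lam)) n)) (Mscale (RtoC (-1)) S))
                         (Madd (phase2 (zr, zi) S) (Mscale (RtoC (-1)) S))).
  { apply Madd_scale_compat; [|apply MatEq_refl].
    exact (TI_phase_covariance tau n E (rho lam) t HE HTI (density_tpow_rho lam n Hl)). }
  pose proof (psd4_phase_block_bound O S zr zi (s ^ n - 1) HO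
    (CPTP_density _ _ _ _ HE (density_tpow_rho lam n Hl)) Hz Hup
    (MatEq_trans _ _ _ _ Hright Hcov) (MatEq_trans _ _ _ _ Hdown Hcov) HT) as Hbound.
  assert (Hzr : zr = 1 - 2 * y).
  { unfold zr, y; replace (-2 * theta) with (- (2 * theta)) by ring.
    rewrite cos_neg, cos_2a_sin; ring. }
  replace (1 + rld_fisher lam * y) with s.
  - fold x in Hbound; rewrite Hzr in Hbound; lra.
  - unfold s, rld_fisher; rewrite Hzr; field; nra.
Qed.

Lemma exists_small_sin_sq eps : 0 < eps -> exists theta, 0 < sin theta ^ 2 < eps.
Proof.
  intros He; set (theta := Rmin 1 eps / 2).
  assert (H0 : 0 < theta) by (unfold theta, Rmin; destruct (Rle_dec 1 eps); lra).
  assert (H1 : theta <= 1 / 2) by (unfold theta; pose proof (Rmin_l 1 eps); lra).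
  assert (H2 : theta <= eps / 2) by (unfold theta; pose proof (Rmin_r 1 eps); lra).
  assert (Hs0 : 0 < sin theta) by (apply sin_gt_0; pose proof PI2_1; lra).
  assert (Hs1 : sin theta < theta) by (apply sin_lt_x; lra).
  exists theta; split; nra.
Qed.

Lemma coherence_le tau lam n E : 0 < tau -> 0 < lam < 1 ->
  CPTP (2 ^ n) 2 E -> TI (2 ^ n) 2 (Htot n (Hq tau)) (Hq tau) E ->
  let S := E (tpow (rho lam) n) in
  let x := Cre (S 0 1)%nat ^ 2 + Cim (S 0 1)%nat ^ 2 in
  4 * x <= (1 / 4 - x) * (INR n * rld_fisher lam).
Proof.
  intros Htau Hl HE HTI S x.
  destruct (density2_entries S (CPTP_density _ _ _ _ HE (density_tpow_rho lam n Hl)))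
    as (a & b & p & q & _ & _ & S01 & _ & Ha & Hb & Hab & Hpq).
  apply le_of_small_power_bound.
  - unfold x; rewrite S01; unfold Cre, Cim; simpl.
    replace b with (1 - a) in Hpq by lra; pose proof (pow2_ge_0 (a - 1 / 2)); nra.
  - unfold rld_fisher; apply Rlt_le, Rdiv_lt_0_compat; nra.
  - intros eps He; destruct (exists_small_sin_sq eps He) as [theta Htheta].
    exists (sin theta ^ 2); split; [exact Htheta|].
    pose proof PI_RGT_0.
    pose proof (coherence_angle_bound tau lam n E (theta * tau / PI) Hl HE HTI) as Hangle.
    replace (theta * tau / PI * (PI / tau)) with theta in Hangle by (field; lra); exact Hangle.
Qed.

Lemma qform_Phi S : density 2 S -> Cre (qform 2 Phi S) = 1 / 2 + Cre (S 0 1)%nat.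
Proof.
  intros HS; destruct (density2_entries S HS) as (a & b & p & q & S00 & S11 & S01 & S10 & _ & _ & Hab & _).
  unfold qform; cbn [Csum]; unfold Phi; simpl.
  rewrite S00, S11, S01, S10; unfold Cre; cunfold; cbn [fst snd].
  transitivity (/ sqrt 2 * / sqrt 2 * (a + b + 2 * p)); [ring|].
  rewrite sqrt2_inv_sq, Hab; field.
Qed.

Lemma infidelity_ge lam n x rc : 0 < lam < 1 -> (1 <= n)%nat ->
  0 <= x -> rc * rc <= x -> 4 * x <= (1 / 4 - x) * (INR n * rld_fisher lam) ->
  1 / 2 - rc >= / INR n * ((1 - lam ^ 2) / (4 * lam ^ 2)) - ((1 - lam ^ 2) / lam ^ 2) ^ 2 / 4 / INR n ^ 2.
Proof.
  intros Hl Hn Hx Hrc H.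
  assert (Hn' : 1 <= INR n) by (apply (le_INR 1); auto).
  assert (Hl2 : 0 < lam ^ 2 < 1) by (split; nra).
  set (r := (1 - lam ^ 2) / (lam ^ 2 * INR n)).
  assert (Hr : 0 < r) by (unfold r; apply Rdiv_lt_0_compat; nra).
  replace (/ INR n * ((1 - lam ^ 2) / (4 * lam ^ 2)) - ((1 - lam ^ 2) / lam ^ 2) ^ 2 / 4 / INR n ^ 2)
    with (r / 4 - r ^ 2 / 4) by (unfold r; field; split; nra).
  apply (half_sub_ge x); auto.
  assert (Hr' : r * (INR n * rld_fisher lam) = 4) by (unfold r, rld_fisher; field; split; nra).
  assert (Hk : 0 < INR n * rld_fisher lam) by (unfold rld_fisher; apply Rmult_lt_0_compat;
    [lra | apply Rdiv_lt_0_compat; nra]).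
  apply Rmult_le_reg_r with (INR n * rld_fisher lam); [exact Hk|].
  replace (4 * x * (1 + r) * (INR n * rld_fisher lam)) with
    (4 * x * (INR n * rld_fisher lam) + 4 * x * (r * (INR n * rld_fisher lam))) by ring.
  rewrite Hr'; lra.
Qed.

Theorem mainTheorem19 :
  forall (tau lam : R), 0 < tau -> 0 < lam < 1 ->
  exists (K : R) (N : nat),
    forall (n : nat) (E : Mat -> Mat),
      (N <= n)%nat ->
      CPTP (2 ^ n) 2 E ->
      TI (2 ^ n) 2 (Htot n (Hq tau)) (Hq tau) E ->
      1 - Cre (qform 2 Phi (E (tpow (rho lam) n)))
        >= / INR n * ((1 - lam ^ 2) / (4 * lam ^ 2)) - K / (INR n ^ 2).
Proof.
  intros tau lam Htau Hl.
  exists (((1 - lam ^ 2) / lam ^ 2) ^ 2 / 4), 1%nat; intros n E Hn HE HTI.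
  pose proof (coherence_le tau lam n E Htau Hl HE HTI) as Hcoh; cbv zeta in Hcoh.
  set (S := E (tpow (rho lam) n)) in *.
  assert (HS : density 2 S) by exact (CPTP_density _ _ _ _ HE (density_tpow_rho lam n Hl)).
  rewrite qform_Phi by exact HS.
  pose proof (pow2_ge_0 (Cre (S 0 1)%nat)); pose proof (pow2_ge_0 (Cim (S 0 1)%nat)).
  pose proof (infidelity_ge lam n (Cre (S 0 1)%nat ^ 2 + Cim (S 0 1)%nat ^ 2) (Cre (S 0 1)%nat)
    Hl Hn ltac:(lra) ltac:(lra) Hcoh); lra.
Qed.
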